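(* Let $\mathcal A_r^\Pi=\{\mathcal O\in\mathcal A_r:[\mathcal O,\Pi_{GI}]=0\}$ and $\hat{\mathcal A}_r^\Pi=\{\hat{\mathcal O}\in\hat{\mathcal A}_r:[\hat{\mathcal O},\Pi_{GI}]=0\}$. Then $$\mathcal A_r^\Pi\,\Pi_{GI}=\hat{\mathcal A}_r^\Pi\,\Pi_{GI},$$ where $\mathcal X\Pi_{GI}$ denotes $\{X\Pi_{GI}:X\in\mathcal X\}$.
   Context: Setup. Let $G$ be a compact Lie group (possibly finite) with normalized Haar measure $dg$ ($\int dg=1$). Let $\Lambda=(V,E)$ be a finite directed graph; loops and multiple edges are allowed. Each edge $e$ carries $\mathcal H_e=L^2(G)$ with unitaries $L_e(g)|h\rangle_e=|gh\rangle_e$ and $R_e(g^{-1})|h\rangle_e=|hg^{-1}\rangle_e$. Each vertex $v$ carries a Hilbert space $\mathcal H_v$ with a unitary representation $U_v$ of $G$. All these spaces are taken finite-dimensional by truncating to finitely many irreducible isotypic sectors, which are invariant under the group actions. The pre-gauged space is $\mathcal H=\bigotimes_v\mathcal H_v\otimes\bigotimes_e\mathcal H_e$, with $\mathcal A=\mathcal B(\mathcal H)$. The gauge transformation at $v$ is $A_v(g)=U_v(g)\prod_{e\in E^-(v)}L_e(g)\prod_{e\in E^+(v)}R_e(g^{-1})$, where $E^-(v)$ is the set of edges oriented out of $v$ and $E^+(v)$ the set of edges oriented into $v$. Set $\Pi_v=\int dg\,A_v(g)$; these are mutually commuting orthogonal projections. Set $\Pi_{GI}=\prod_v\Pi_v$.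 Subregions. A subregion $r$ is an arbitrary subset of $V\cup E$, and $\bar r$ is its complement. Let $\mathcal H_r=\bigotimes_{x\in r}\mathcal H_x$ and $\mathcal A_r=\mathcal B(\mathcal H_r)\otimes 1_{\bar r}$. Let $V_r$ be the set of vertices $v$ such that $v$ and all edges incident to $v$ lie in $r$, and put $\Pi_{V_r}=\prod_{v\in V_r}\Pi_v$; this is an operator in $\mathcal A_r$. The partially gauged algebra is $\hat{\mathcal A}_r=\{\Pi_{V_r}\mathcal O\Pi_{V_r}:\mathcal O\in\mathcal A_r\}$, i.e. the operators on $\hat{\mathcal H}_r=\Pi_{V_r}\mathcal H_r$ tensored with $1_{\bar r}$. *)

From HB Require Import structures.
From mathcomp Require Import all_boot all_order all_algebra.
Set Implicit Arguments. Unset Strict Implicit. Unset Printing Implicit Defensive.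
Import Order.TTheory GRing.Theory Num.Theory.
Local Open Scope ring_scope.

Section LatticeGauge.
Variables (C : numClosedFieldType) (V E : finType) (src tgt : E -> V).
(* sites of the graph: vertices and edges *)
Variable d : V + E -> nat.  (* (truncated) dimension of the local Hilbert space *)

(* product basis of H = (x)_v H_v (x) (x)_e H_e *)
Definition basis := {dffun forall x : V + E, 'I_(d x)}.
Definition dimH := #|basis|.
Definition op := 'M[C]_dimH.
Definition bidx (k : 'I_dimH) : basis := enum_val k.

Definition agree (S : {set V + E}) (i j : basis) := [forall x in S, i x == j x].

(* O belongs to A_r = B(H_r) (x) 1_{rbar} *)
Definition in_Ar (r : {set V + E}) (O : op) : Prop :=
  exists f : basis -> basis -> C,
    (forall i i' j j', agree r i i' -> agree r j j' -> f i j = f i' j') /\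
    (forall k l, O k l = if agree (~: r) (bidx k) (bidx l)
                         then f (bidx k) (bidx l) else 0).

Definition adjmx (A : op) : op := (map_mx (fun z : C => z^*) A)^T.

Definition star (v : V) : {set V + E} :=
  [set x | match x with
           | inl w => w == v
           | inr e => (src e == v) || (tgt e == v) end].

Definition Vr (r : {set V + E}) : {set V} := [set v | star v \subset r].

Definition prod_proj (Pi : V -> op) (S : {set V}) : op :=
  \big[@mulmx C dimH dimH dimH / 1%:M]_(v in S) Pi v.

Definition PiGI (Pi : V -> op) : op := prod_proj Pi setT.

(* partially gauged algebra \hat A_r, as operators on H *)
Definition in_hat (Pi : V -> op) (r : {set V + E}) (Oh : op) : Prop :=
  exists O, in_Ar r O /\ Oh = prod_proj Pi (Vr r) *m O *m prod_proj Pi (Vr r).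

(* A_r^Pi Pi_GI and \hat A_r^Pi Pi_GI, as predicates on operators *)
Definition A_Pi_times (Pi : V -> op) (r : {set V + E}) (X : op) : Prop :=
  exists O, in_Ar r O /\ O *m PiGI Pi = PiGI Pi *m O /\ X = O *m PiGI Pi.

Definition Ahat_Pi_times (Pi : V -> op) (r : {set V + E}) (X : op) : Prop :=
  exists Oh, in_hat Pi r Oh /\ Oh *m PiGI Pi = PiGI Pi *m Oh /\ X = Oh *m PiGI Pi.

End LatticeGauge.

From HB Require Import structures.
From mathcomp Require Import all_boot all_order all_algebra.
Set Implicit Arguments. Unset Strict Implicit. Unset Printing Implicit Defensive.
Import Order.TTheory GRing.Theory Num.Theory.
Local Open Scope ring_scope.

(* Write P = Pi_{V_r} and G = Pi_GI.  The proof rests on two facts.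
   (1) Absorption: since the Pi_v are commuting idempotents and G is the
       product of all of them, P G = G = G P.
   (2) Locality of P: each Pi_v lies in A_{star v}, and star v is inside r for
       v in V_r; since A_r is monotone in r and closed under products (with
       1 in A_r), P lies in A_r and so does P O P for every O in A_r.
   Given O in A_r commuting with G, the operator P O P is in \hat A_r, commutes
   with G and satisfies (P O P) G = O G by (1).  Conversely an element of
   \hat A_r is itself in A_r by (2), so it already witnesses the left side. *)

Section LocalAlgebra.
Variables (C : numClosedFieldType) (V E : finType) (d : V + E -> nat).

Local Notation basis := (basis d).
Local Notation op := (op C d).
Local Notation bidx := (@bidx V E d).

Definition merge (S : {set V + E}) (a b : basis) : basis :=
  [ffun x => if x \in S then a x else b x].

Lemma mergeE S (a b : basis) x : merge S a b x = if x \in S then a x else b x.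
Proof. by rewrite ffunE. Qed.

Lemma agreeP (S : {set V + E}) (i j : basis) :
  reflect (forall x, x \in S -> i x = j x) (agree S i j).
Proof.
apply: (iffP forallP) => [H x xS | H x]; first exact/eqP/(implyP (H x)).
by apply/implyP => /H ->.
Qed.

Lemma agree_sym S (i j : basis) : agree S i j -> agree S j i.
Proof. by move/agreeP=> A; apply/agreeP => x /A ->. Qed.

Lemma agree_trans S (i j k : basis) : agree S i j -> agree S j k -> agree S i k.
Proof. by move=> /agreeP A /agreeP B; apply/agreeP => x xS; rewrite A ?B. Qed.

Lemma agree_sub (S r : {set V + E}) (i j : basis) :
  S \subset r -> agree r i j -> agree S i j.
Proof. by move=> sSr /agreeP A; apply/agreeP => x /(subsetP sSr)/A. Qed.

Lemma agree_congr S (i i' j j' : basis) :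
  agree S i i' -> agree S j j' -> agree S i j = agree S i' j'.
Proof.
move=> Hi Hj; apply/idP/idP => A.
  exact: agree_trans (agree_trans (agree_sym Hi) A) Hj.
exact: agree_trans (agree_trans Hi A) (agree_sym Hj).
Qed.

Lemma agree_merge_in S (a b : basis) : agree S (merge S a b) a.
Proof. by apply/agreeP => x xS; rewrite mergeE xS. Qed.

Lemma agree_merge_out S (a b : basis) : agree (~: S) (merge S a b) b.
Proof. by apply/agreeP => x; rewrite in_setC mergeE => /negbTE ->. Qed.

Lemma agree_splitC (S r : {set V + E}) (i j : basis) : S \subset r ->
  agree (~: S) i j = agree (~: r) i j && agree (r :\: S) i j.
Proof.
move=> sSr; apply/idP/andP => [A | [/agreeP A1 /agreeP A2]].
  by split; apply: agree_sub A; rewrite ?setCS // setDE subsetIr.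
apply/agreeP => x; rewrite in_setC => xS.
case xr: (x \in r); first by apply: A2; rewrite inE xS.
by apply: A1; rewrite in_setC xr.
Qed.

Lemma agree_eq r (i j : basis) : agree r i j -> agree (~: r) i j -> i = j.
Proof.
move=> /agreeP A1 /agreeP A2; apply/ffunP => x.
by case xr: (x \in r); [apply: A1 | apply: A2; rewrite in_setC xr].
Qed.

Definition rk (i : basis) : 'I_(dimH d) := enum_rank i.

Lemma bidx_rk (i : basis) : bidx (rk i) = i. Proof. exact: enum_rankK. Qed.
Lemma rk_bidx (k : 'I_(dimH d)) : rk (bidx k) = k. Proof. exact: enum_valK. Qed.

Lemma mulmx_basisE (A B : op) (i j : basis) :
  (A *m B) (rk i) (rk j) = \sum_(b : basis) A (rk i) (rk b) * B (rk b) (rk j).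
Proof.
by rewrite mxE (reindex rk) //; exists bidx => k _; rewrite ?bidx_rk ?rk_bidx.
Qed.

Definition local_entries (r : {set V + E}) (O : op) :=
  (forall i j : basis, ~~ agree (~: r) i j -> O (rk i) (rk j) = 0) /\
  (forall i j i' j' : basis, agree (~: r) i j -> agree (~: r) i' j' ->
     agree r i i' -> agree r j j' -> O (rk i) (rk j) = O (rk i') (rk j')).

Lemma in_Ar_local r (O : op) : in_Ar r O -> local_entries r O.
Proof.
case=> f [Hf HO]; split => [i j Hij | i j i' j' Hij Hij' Hi Hj].
  by rewrite HO !bidx_rk (negbTE Hij).
by rewrite !HO !bidx_rk Hij Hij'; apply: Hf.
Qed.

Lemma local_in_Ar r (O : op) : local_entries r O -> in_Ar r O.
Proof.
case=> O0 O1; exists (fun i j => O (rk i) (rk (merge r j i))); split.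
  move=> i i' j j' Hi Hj; apply: O1 => //; try exact/agree_sym/agree_merge_out.
  exact: agree_trans (agree_trans (agree_merge_in _ _ _) Hj)
                     (agree_sym (agree_merge_in _ _ _)).
move=> k l; rewrite -{1}(rk_bidx k) -{1}(rk_bidx l).
case: ifP => Hkl; last by rewrite O0 ?Hkl.
suff -> : merge r (bidx l) (bidx k) = bidx l by [].
apply: (@agree_eq r); first exact: agree_merge_in.
exact: agree_trans (agree_merge_out _ _ _) Hkl.
Qed.

Lemma in_Ar_mono (S r : {set V + E}) (O : op) :
  S \subset r -> in_Ar S O -> in_Ar r O.
Proof.
move=> sSr [f [Hf HO]].
exists (fun i j => if agree (r :\: S) i j then f i j else 0); split.
  move=> i i' j j' Hi Hj; rewrite (Hf i i' j j') ?(agree_sub sSr) //.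
  by rewrite (agree_congr (agree_sub (subsetDl r S) Hi)
                          (agree_sub (subsetDl r S) Hj)).
by move=> k l; rewrite HO (agree_splitC _ _ sSr); case: agree.
Qed.

Lemma in_Ar_1 r : in_Ar r (1%:M : op).
Proof.
exists (fun i j => (agree r i j)%:R); split.
  by move=> i i' j j' Hi Hj; rewrite (agree_congr Hi Hj).
move=> k l; rewrite mxE; case: ifP => Hkl; last first.
  by case: eqP => // ekl; rewrite ekl in Hkl; case/negP: Hkl; apply/agreeP.
congr (_%:R); congr nat_of_bool; apply/eqP/idP => [-> | A]; first exact/agreeP.
by rewrite -(rk_bidx k) -(rk_bidx l) (agree_eq A Hkl).
Qed.

(* Moving along the fibre of labels agreeing off r: b |-> merge r b i is a
   bijection from the fibre of i' onto the fibre of i preserving r-parts. *)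
Lemma sum_fibre r (i i' : basis) (F : basis -> C) :
  \sum_(b | agree (~: r) i b) F b = \sum_(b | agree (~: r) i' b) F (merge r b i).
Proof.
rewrite (reindex_onto (merge r ^~ i) (merge r ^~ i')) => [|b Hb].
  apply: eq_bigl => b; rewrite (agree_sym (agree_merge_out r b i)) /=.
  apply/eqP/idP => [<- | Hb]; first exact/agree_sym/agree_merge_out.
  apply: (@agree_eq r).
    exact: agree_trans (agree_merge_in _ _ _) (agree_merge_in _ _ _).
  exact: agree_trans (agree_merge_out _ _ _) Hb.
apply: (@agree_eq r).
  exact: agree_trans (agree_merge_in _ _ _) (agree_merge_in _ _ _).
exact: agree_trans (agree_merge_out _ _ _) Hb.
Qed.

Lemma in_Ar_mul r (A B : op) : in_Ar r A -> in_Ar r B -> in_Ar r (A *m B).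
Proof.
move=> /in_Ar_local[A0 A1] /in_Ar_local[B0 B1]; apply: local_in_Ar.
have fibre i j : (A *m B) (rk i) (rk j) =
    \sum_(b | agree (~: r) i b) A (rk i) (rk b) * B (rk b) (rk j).
  rewrite mulmx_basisE (bigID (agree (~: r) i)) /= [X in _ + X]big1 ?addr0 //.
  by move=> b /A0 ->; rewrite mul0r.
split=> [i j Hij | i j i' j' Hij Hij' Hi Hj].
  rewrite fibre big1 // => b Hib; rewrite B0 ?mulr0 //.
  by apply: contra Hij; apply: agree_trans.
rewrite !fibre (sum_fibre r i i'); apply: eq_bigr => b Hb.
have Hm := agree_merge_out r b i; have Hm' := agree_merge_in r b i.
congr (_ * _); first exact: A1 (agree_sym Hm) Hb Hi Hm'.
exact: B1 (agree_trans Hm Hij) (agree_trans (agree_sym Hb) Hij') Hm' Hj.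
Qed.

End LocalAlgebra.

Section CommutingProjections.
Variables (C : numClosedFieldType) (V E : finType) (d : V + E -> nat).
Variable Pi : V -> op C d.
Hypothesis Pi_idem : forall v, Pi v *m Pi v = Pi v.
Hypothesis Pi_comm : forall v w, Pi v *m Pi w = Pi w *m Pi v.

Local Notation prod_seq s P :=
  (\big[@mulmx C (dimH d) (dimH d) (dimH d) / 1%:M]_(w <- s | P w) Pi w).

Lemma Pi_comm_prod v (s : seq V) (P : pred V) :
  Pi v *m prod_seq s P = prod_seq s P *m Pi v.
Proof.
apply: (big_ind (fun B => Pi v *m B = B *m Pi v)) => [|A B HA HB|w _].
- by rewrite mulmx1 mul1mx.
- by rewrite mulmxA HA -mulmxA HB mulmxA.
- exact: Pi_comm.
Qed.

Lemma Pi_absorb v (s : seq V) (P : pred V) :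
  v \in s -> P v -> Pi v *m prod_seq s P = prod_seq s P.
Proof.
move=> + Pv; elim: s => // w s IH; rewrite inE big_cons.
case: (eqVneq v w) => [<- _ | _ /= vs]; first by rewrite Pv mulmxA Pi_idem.
case: ifP => _; last exact: IH.
by rewrite mulmxA Pi_comm -mulmxA IH.
Qed.

Lemma PiGI_absorb_l v : Pi v *m PiGI Pi = PiGI Pi.
Proof. by apply: Pi_absorb; rewrite ?mem_index_enum ?in_setT. Qed.

Lemma PiGI_absorb_r v : PiGI Pi *m Pi v = PiGI Pi.
Proof. by rewrite -[PiGI Pi]/(prod_seq _ _) -Pi_comm_prod PiGI_absorb_l. Qed.

Lemma prod_proj_PiGI (S : {set V}) : prod_proj Pi S *m PiGI Pi = PiGI Pi.
Proof.
apply: (big_ind (fun X => X *m PiGI Pi = PiGI Pi)) => [|A B HA HB|w _].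
- exact: mul1mx.
- by rewrite -mulmxA HB HA.
- exact: PiGI_absorb_l.
Qed.

Lemma PiGI_prod_proj (S : {set V}) : PiGI Pi *m prod_proj Pi S = PiGI Pi.
Proof.
apply: (big_ind (fun X => PiGI Pi *m X = PiGI Pi)) => [|A B HA HB|w _].
- exact: mulmx1.
- by rewrite mulmxA HA HB.
- exact: PiGI_absorb_r.
Qed.

End CommutingProjections.

Lemma prod_proj_local (C : numClosedFieldType) (V E : finType)
    (src tgt : E -> V) (d : V + E -> nat) (Pi : V -> op C d)
    (Pi_local : forall v, in_Ar (star src tgt v) (Pi v)) (r : {set V + E}) :
  in_Ar r (prod_proj Pi (Vr src tgt r)).
Proof.
apply: (big_ind (in_Ar r)) => [|A B|v]; [exact: in_Ar_1 | exact: in_Ar_mul |].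
by rewrite inE => star_r; apply: in_Ar_mono star_r (Pi_local v).
Qed.

Theorem lemma3 (C : numClosedFieldType) (V E : finType) (src tgt : E -> V)
  (d : V + E -> nat) (Pi : V -> op C d)
  (Pi_idem : forall v, Pi v *m Pi v = Pi v)
  (Pi_herm : forall v, adjmx (Pi v) = Pi v)
  (Pi_comm : forall v w, Pi v *m Pi w = Pi w *m Pi v)
  (Pi_local : forall v, @in_Ar C V E d (star src tgt v) (Pi v))
  (r : {set V + E}) :
  forall X : op C d,
    @A_Pi_times C V E d Pi r X <-> @Ahat_Pi_times C V E src tgt d Pi r X.
Proof.
move=> X; set P := prod_proj Pi (Vr src tgt r); set G := PiGI Pi.
have PG : P *m G = G by apply: prod_proj_PiGI.
have GP : G *m P = G by apply: PiGI_prod_proj.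
split=> [[O [O_loc [O_comm ->]]] | [Oh [[O [O_loc ->]] [Oh_comm ->]]]].
  have POP_G : P *m O *m P *m G = O *m G by rewrite -!mulmxA PG O_comm mulmxA PG.
  have G_POP : G *m (P *m O *m P) = O *m G.
    by rewrite !mulmxA GP -O_comm -mulmxA GP.
  exists (P *m O *m P); split; first by exists O.
  by rewrite POP_G G_POP.
have P_loc : in_Ar r P by apply: prod_proj_local.
exists (P *m O *m P); split => //.
by apply: in_Ar_mul => //; apply: in_Ar_mul.
Qed.
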